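(* Let $C$ be a parity complex. For all $u,v,x\in C$, if $u\lhd v$ and $v\in x^+$, then $u^-\cap x^{-+}=\emptyset$.
   Context: A parity complex consists of a set $C=\bigsqcup_{n\ge 0}C_n$ graded by dimension, together with, for each $n\ge 0$ and each $x\in C_{n+1}$, two disjoint, non-empty, finite subsets $x^-,x^+\subseteq C_n$ (for $x\in C_0$ put $x^-=x^+=\emptyset$), subject to Axioms 1, 2, 3A, 3B below. Notation: for $S\subseteq C$, $S^-=\bigcup_{w\in S}w^-$ and $S^+=\bigcup_{w\in S}w^+$; iterated faces are written $x^{-+}=(x^-)^+$, etc. For $S,T\subseteq C$ write $S\perp T$ when $S^-\cap T^-=\emptyset$ and $S^+\cap T^+=\emptyset$; $x\perp y$ means $\{x\}\perp\{y\}$. With $S_n=S\cap C_n$, a set $S$ is well-formed when $S_0$ has at most one element and for every $n>0$ and all distinct $x,y\in S_n$, $x\perp y$. Write $x<y$ when $x^+\cap y^-\neq\emptyset$, and let $\lhd$ be the reflexive transitive closure of $<$. Axioms: (1) for all $x$, $x^{++}\cup x^{--}=x^{-+}\cup x^{+-}$; (2) for all $x$, $x^-$ and $x^+$ are well-formed; (3A) $x\lhd y$ and $y\lhd x$ imply $x=y$; (3B) if $x\lhd y$ then there is no $z\in C$ with $x\in z^+$ and $y\in z^-$, and no $z\in C$ with $y\in z^+$ and $x\in z^-$. *)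

From Stdlib Require Import List Relations.

Set Implicit Arguments.

Section ParityComplex.

Variable C : Type.
Variable dim : C -> nat.
(* minus x y  <->  y \in x^-  ;  plus x y  <->  y \in x^+ *)
Variables minus plus : C -> C -> Prop.

Definition Sminus (S : C -> Prop) : C -> Prop := fun y => exists w, S w /\ minus w y.
Definition Splus (S : C -> Prop) : C -> Prop := fun y => exists w, S w /\ plus w y.

Definition perp (S T : C -> Prop) : Prop :=
  (forall y, ~ (Sminus S y /\ Sminus T y)) /\
  (forall y, ~ (Splus S y /\ Splus T y)).

Definition single (x : C) : C -> Prop := fun y => y = x.

Definition well_formed (S : C -> Prop) : Prop :=
  (forall a b, S a -> S b -> dim a = 0 -> dim b = 0 -> a = b) /\
  (forall n x y, 0 < n -> S x -> S y -> dim x = n -> dim y = n -> x <> y ->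
     perp (single x) (single y)).

Definition pc_lt (x y : C) : Prop := exists z, plus x z /\ minus y z.

Definition pc_tri : C -> C -> Prop := clos_refl_trans C pc_lt.

Definition is_parity_complex : Prop :=
  (forall x y, minus x y -> dim x = S (dim y)) /\
  (forall x y, plus x y -> dim x = S (dim y)) /\
  (forall x y, dim x = 0 -> ~ minus x y /\ ~ plus x y) /\
  (forall x, 0 < dim x -> (exists y, minus x y) /\ (exists y, plus x y)) /\
  (forall x, exists l : list C, forall y, minus x y <-> In y l) /\
  (forall x, exists l : list C, forall y, plus x y <-> In y l) /\
  (forall x y, ~ (minus x y /\ plus x y)) /\
  (forall x z,
     (Splus (plus x) z \/ Sminus (minus x) z) <->
     (Splus (minus x) z \/ Sminus (plus x) z)) /\
  (forall x, well_formed (minus x) /\ well_formed (plus x)) /\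
  (forall x y, pc_tri x y -> pc_tri y x -> x = y) /\
  (forall x y, pc_tri x y ->
     ~ (exists z, plus z x /\ minus z y) /\
     ~ (exists z, plus z y /\ minus z x)).

End ParityComplex.

From Stdlib Require Import List Relations.

Set Implicit Arguments.

Section ParityComplexOrder.

Variable C : Type.
Variable dim : C -> nat.
Variables minus plus : C -> C -> Prop.

Lemma pc_tri_lt_trans (w u v : C) :
  pc_lt minus plus w u -> pc_tri minus plus u v -> pc_tri minus plus w v.
Proof. intros Hwu Huv; apply rt_trans with u; [apply rt_step |]; assumption. Qed.

Lemma parity_complex_no_cell_between (x y z : C) :
  is_parity_complex dim minus plus -> pc_tri minus plus x y ->
  minus z x -> plus z y -> False.
Proof.
  intros (_ & _ & _ & _ & _ & _ & _ & _ & _ & _ & Hax3B) Hxy Hzx Hzy.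
  destruct (Hax3B x y Hxy) as [_ Hno_zyx].
  apply Hno_zyx; exists z; split; assumption.
Qed.

End ParityComplexOrder.

Theorem proposition1p2 (C : Type) (dim : C -> nat) (minus plus : C -> C -> Prop) :
  is_parity_complex dim minus plus ->
  forall u v x : C,
    pc_tri minus plus u v -> plus x v ->
    forall z : C, ~ (minus u z /\ Splus plus (minus x) z).
Proof.
  intros Hpc u v x Huv Hxv z [Huz [w [Hxw Hwz]]].
  assert (Hwv : pc_tri minus plus w v).
  { apply pc_tri_lt_trans with u; [exists z; split |]; assumption. }
  exact (parity_complex_no_cell_between x Hpc Hwv Hxw Hxv).
Qed.
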